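(* Let $\mathbb{K}$ be a field, $R=\mathbb{K}\langle x,y\rangle/(xy-1)$, $f_k=y^{k-1}x^{k-1}-y^kx^k$ and $S_k=Rf_k$ for $k\ge1$, $I=\bigoplus_{k\ge1}S_k=\langle1-yx\rangle$, and $I_0=\{x^{k-1}f_k: k\ge1\}$. Any left ideal $H$ of $R$ can be written as a direct sum of left $R$-submodules $H=\mathbb{K}[y]L\oplus Rp(x)$, where: if $H$ is not semisimple, then $p(x)$ is the unique monic polynomial in $x$ of minimal degree among nonzero polynomials in $x$ belonging to $H$, and $L=H\cap\mathrm{Span}_{\mathbb{K}}(I_0)\cap(S_1\oplus\cdots\oplus S_{\deg(p)})$; if $H$ is semisimple, then $p(x)=0$, $L=H\cap\mathrm{Span}_{\mathbb{K}}(I_0)$ and $H=\mathbb{K}[y]L$.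
   Context: $\mathbb{K}[x]$ and $\mathbb{K}[y]$ denote the subalgebras of $R$ generated by $x$ and $y$ respectively; $\mathbb{K}[y]L$ is the set of $\mathbb{K}[y]$-linear combinations of elements of $L$. *)

(* The Jacobson algebra R = K<x,y>/(xy - 1) is built
   concretely as the monoid algebra over K of the bicyclic monoid
   B = <x, y | xy = 1>, whose elements are the normal words y^i x^j,
   encoded as pairs (i, j) : nat * nat.  Since the monoid algebra of a
   monoid presented by <X | rel> is the free algebra K<X> modulo the
   corresponding two-sided ideal, K[B] is exactly K<x,y>/(xy - 1).     *)
From HB Require Import structures.
From mathcomp Require Import all_boot all_order all_algebra.
From mathcomp Require Import finmap.
From mathcomp.multinomials Require Import monalg.
From mathcomp Require Import zify.

Set Implicit Arguments.
Unset Strict Implicit.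
Unset Printing Implicit Defensive.

Import GRing.Theory.
Local Open Scope fset.
Local Open Scope ring_scope.

(* (i, j) stands for the word y^i x^j; x^j y^k reduces using xy = 1.     *)
Definition bone : nat * nat := (0%N, 0%N).
Definition bmul (a b : nat * nat) : nat * nat :=
  ((a.1 + (b.1 - a.2))%N, (b.2 + (a.2 - b.1))%N).

Lemma bmulA : associative bmul.
Proof.
move=> [i j] [k l] [m n]; rewrite /bmul /=; congr pair; lia.
Qed.
Lemma bmul1m : left_id bone bmul.
Proof. move=> [i j]; rewrite /bmul /=; congr pair; lia. Qed.
Lemma bmulm1 : right_id bone bmul.
Proof. move=> [i j]; rewrite /bmul /=; congr pair; lia. Qed.

Section Jacobson.
Variable (K : fieldType).

Definition jacobson : predArgType := {malg K[(nat * nat)%type]}.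
HB.instance Definition _ := GRing.Lmodule.on jacobson.

Implicit Types (g : jacobson).

Local Notation "g1 *M_[ k1 , k2 ] g2" :=
  (<< g1@_k1 * g2@_k2 *g (bmul k1 k2) >> : jacobson)
  (at level 40, no associativity).

Definition jone : jacobson := << bone >>.

Definition jmul g1 g2 : jacobson :=
  \sum_(k1 <- msupp g1) \sum_(k2 <- msupp g2) g1 *M_[k1, k2] g2.

Lemma jmulr g1 g2 :
  jmul g1 g2 = \sum_(k2 <- msupp g2) \sum_(k1 <- msupp g1) g1 *M_[k1, k2] g2.
Proof. by rewrite /jmul exchange_big. Qed.

Lemma jmullw (d1 d2 : {fset (nat * nat)}) g1 g2 :
  msupp g1 `<=` d1 -> msupp g2 `<=` d2 ->
  jmul g1 g2 = \sum_(k1 <- d1) \sum_(k2 <- d2) g1 *M_[k1, k2] g2.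
Proof.
move=> le_d1 le_d2; rewrite /jmul (big_fset_incl _ le_d1) /=.
  apply/eq_bigr=> k1 _; apply/big_fset_incl => // k _ /mcoeff_outdom ->.
  by rewrite mulr0 monalgU0.
move=> k _ /mcoeff_outdom g1k.
by rewrite big1 => // k' _; rewrite g1k mul0r monalgU0.
Qed.

Lemma jmulrw (d1 d2 : {fset (nat * nat)}) g1 g2 :
  msupp g1 `<=` d1 -> msupp g2 `<=` d2 ->
  jmul g1 g2 = \sum_(k2 <- d2) \sum_(k1 <- d1) g1 *M_[k1, k2] g2.
Proof. by move=> le_d1 le_d2; rewrite (jmullw le_d1 le_d2) exchange_big. Qed.

Lemma jmul0g : left_zero 0 jmul.
Proof. by move=> g; rewrite /jmul msupp0 big_seq_fset0. Qed.

Lemma jmulg0 : right_zero 0 jmul.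
Proof. by move=> g; rewrite jmulr msupp0 big_seq_fset0. Qed.

Lemma jmulUg c k g :
  jmul << c *g k >> g = \sum_(k' <- msupp g) << c * g@_k' *g bmul k k' >>.
Proof.
rewrite (jmullw msuppU_le (fsubset_refl _)) big_seq_fset1.
by apply/eq_bigr => k' _; rewrite mcoeffUU.
Qed.

Lemma jmulgU c k g :
  jmul g << c *g k >> = \sum_(k' <- msupp g) << g@_k' * c *g bmul k' k >>.
Proof.
rewrite (jmulrw (fsubset_refl _) msuppU_le) big_seq_fset1.
by apply/eq_bigr=> k' _; rewrite mcoeffUU.
Qed.

Lemma jmulUU c1 c2 k1 k2 :
  jmul << c1 *g k1 >> << c2 *g k2 >> = << c1 * c2 *g bmul k1 k2 >>.
Proof. by rewrite (jmulrw msuppU_le msuppU_le) !big_seq_fset1 !mcoeffUU. Qed.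

Lemma jmulEl1 g1 g2 :
  jmul g1 g2 = \sum_(k1 <- msupp g1) jmul << g1@_k1 *g k1 >> g2.
Proof. by apply/eq_bigr=> k _; rewrite jmulUg. Qed.

Lemma jmulEr1 g1 g2 :
  jmul g1 g2 = \sum_(k2 <- msupp g2) jmul g1 << g2@_k2 *g k2 >>.
Proof. by rewrite jmulr; apply/eq_bigr=> k _; rewrite jmulgU. Qed.

Lemma jmul1g : left_id jone jmul.
Proof.
move=> g; rewrite /jone jmulUg [RHS]monalgE.
by apply/eq_bigr=> kg _; rewrite mul1r bmul1m.
Qed.

Lemma jmulg1 : right_id jone jmul.
Proof.
move=> g; rewrite /jone jmulgU [RHS]monalgE.
by apply/eq_bigr=> k _; rewrite mulr1 bmulm1.
Qed.

Lemma jmulgDl : left_distributive jmul +%R.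
Proof.
move=> g1 g2 g.
rewrite [in RHS](jmullw (fsubsetUl _ (msupp g2)) (fsubset_refl _)).
rewrite [in RHS](jmullw (fsubsetUr (msupp g1) _) (fsubset_refl _)).
rewrite (jmullw (msuppD_le _ _) (fsubset_refl _)).
rewrite -big_split /=; apply/eq_bigr=> k1 _.
rewrite -big_split /=; apply/eq_bigr=> k2 _.
by rewrite mcoeffD mulrDl monalgUD.
Qed.

Lemma jmulgDr : right_distributive jmul +%R.
Proof.
move=> g g1 g2.
rewrite [in RHS](jmulrw (fsubset_refl _) (fsubsetUl _ (msupp g2))).
rewrite [in RHS](jmulrw (fsubset_refl _) (fsubsetUr (msupp g1) _)).
rewrite (jmulrw (fsubset_refl _) (msuppD_le _ _)).
rewrite -big_split /=; apply/eq_bigr => k1 _.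
rewrite -big_split /=; apply/eq_bigr => k2 _.
by rewrite mcoeffD mulrDr monalgUD.
Qed.

Lemma jmulA : associative jmul.
Proof.
move=> g1 g2 g3.
rewrite [RHS](big_morph (jmul^~ _) (fun _ _ => jmulgDl _ _ _) (jmul0g _)).
rewrite jmulEl1; apply/eq_bigr=> k1 _.
rewrite [LHS](big_morph (jmul _) (fun _ _ => jmulgDr _ _ _) (jmulg0 _)).
rewrite [RHS](big_morph (jmul^~ _) (fun _ _ => jmulgDl _ _ _) (jmul0g _)).
apply/eq_bigr=> k2 _.
rewrite [LHS](big_morph (jmul _) (fun _ _ => jmulgDr _ _ _) (jmulg0 _)).
by rewrite jmulEr1; apply/eq_bigr=> k3 _; rewrite !jmulUU mulrA bmulA.
Qed.

Lemma jone_neq0 : jone != 0.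
Proof.
apply/eqP/malgP=> /(_ bone) /eqP.
by rewrite /jone mcoeffUU mcoeff0 oner_eq0.
Qed.

HB.instance Definition _ := GRing.Zmodule_isRing.Build jacobson
  jmulA jmul1g jmulg1 jmulgDl jmulgDr jone_neq0.

End Jacobson.

Section Objects.
Variable (K : fieldType).
Local Notation R := (jacobson K).

Definition jx : R := << (1 : K) *g (0%N, 1%N) >>.
Definition jy : R := << (1 : K) *g (1%N, 0%N) >>.

Definition peval (q : {poly K}) (r : R) : R :=
  \sum_(i < size q) q`_i *: r ^+ i.

Definition fk (k : nat) : R :=
  jy ^+ k.-1 * jx ^+ k.-1 - jy ^+ k * jx ^+ k.

Definition left_ideal (H : R -> Prop) : Prop :=
  [/\ H 0, (forall a b, H a -> H b -> H (a + b))
    & (forall r a, H a -> H (r * a))].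

Definition direct_sum (H A B : R -> Prop) : Prop :=
  [/\ left_ideal A, left_ideal B,
      (forall z, A z -> B z -> z = 0)
    & (forall h, H h <-> exists a b, [/\ A a, B b & h = a + b])].

Definition semisimple (H : R -> Prop) : Prop :=
  forall N : R -> Prop, left_ideal N -> (forall r, N r -> H r) ->
  exists N' : R -> Prop, (forall r, N' r -> H r) /\ direct_sum H N N'.

Definition Rmul (a : R) : R -> Prop := fun r => exists s : R, r = s * a.

Definition Ky_span (L : R -> Prop) : R -> Prop := fun r =>
  exists (n : nat) (q : nat -> {poly K}) (l : nat -> R),
    (forall i, (i < n)%N -> L (l i)) /\
    r = \sum_(i < n) peval (q i) jy * l i.

Definition span_I0 : R -> Prop := fun r =>
  exists (n : nat) (c : nat -> K),
    r = \sum_(k < n) c k *: (jx ^+ k * fk k.+1).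

Definition sum_S (d : nat) : R -> Prop := fun r =>
  exists c : nat -> R, r = \sum_(1 <= k < d.+1) c k * fk k.

End Objects.

(* Put e = 1 - yx = f_1.  As xy = 1, e is idempotent, x e = 0 = e y, f_(k+1) = y^k e x^k and
   h = y^m x^m h + \sum_(k<m) y^k e x^k h for every m.  In R, x^m h lies in K[x] for m large,
   e h lies in e K[x] = Span(I_0), and c |-> e c(x) is injective because
   e c(x) y^(deg c) = lead(c) e.  So a left ideal H is generated over K[y] by H \cap e K[x]
   together with H \cap K[x] = K[x] p.  Reducing the e c(x) modulo p gives H = K[y]L + R p(x);
   the sum is direct because L is killed by y^(deg p) while no nonzero element of R p(x) is.
   If p = 0 then H = K[y]L, and a complement of a submodule N of H is built from a complement,
   in echelon form, of {c | e c(x) \in N} in {c | e c(x) \in H}. *)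

From HB Require Import structures.
From mathcomp Require Import all_boot all_order all_algebra.
From mathcomp Require Import finmap.
From mathcomp.multinomials Require Import monalg.
From mathcomp Require Import zify.
From Stdlib Require Import Classical Wf_nat.

Set Implicit Arguments.
Unset Strict Implicit.
Unset Printing Implicit Defensive.

Import GRing.Theory.
Local Open Scope ring_scope.

Section OneSidedInverse.
Variables (A : pzRingType) (x y : A).
Local Notation e := (1 - y * x).

Lemma yx_telescope m h :
  h = y ^+ m * (x ^+ m * h) + \sum_(k < m) y ^+ k * (e * (x ^+ k * h)).
Proof.
elim: m => [|m IHm]; first by rewrite big_ord0 addr0 !expr0 !mul1r.
rewrite {1}IHm big_ord_recr /= [RHS]addrCA [LHS]addrC; congr (_ + _).
by rewrite mulrBl mul1r mulrBr exprSr exprS !mulrA addrC subrK.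
Qed.

Hypothesis xy1 : x * y = 1.

Lemma mulx_e : x * e = 0.
Proof. by rewrite mulrBr mulr1 mulrA xy1 mul1r subrr. Qed.

Lemma mule_y : e * y = 0.
Proof. by rewrite mulrBl mul1r -mulrA xy1 mulr1 subrr. Qed.

Lemma mulee : e * e = e.
Proof. by rewrite [in LHS]mulrBl mul1r -mulrA mulx_e mulr0 subr0. Qed.

Lemma exprx_e n : (0 < n)%N -> x ^+ n * e = 0.
Proof. by case: n => // n _; rewrite exprSr -mulrA mulx_e mulr0. Qed.

Lemma e_expry n : (0 < n)%N -> e * y ^+ n = 0.
Proof. by case: n => // n _; rewrite exprS mulrA mule_y mul0r. Qed.

Lemma exprxy m n : x ^+ m * y ^+ n = y ^+ (n - m) * x ^+ (m - n).
Proof.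
elim: m n => [|m IHm] n; first by rewrite subn0 sub0n expr0 mul1r mulr1.
case: n => [|n]; first by rewrite sub0n subn0 !expr0 mulr1 mul1r.
by rewrite !subSS -IHm exprSr exprS mulrA -(mulrA _ x) xy1 mulr1.
Qed.

Lemma e_exprxy i j :
  e * x ^+ j * y ^+ i = if (i <= j)%N then e * x ^+ (j - i) else 0.
Proof.
rewrite -mulrA exprxy mulrA; case: leqP => [le_ij | lt_ji].
  by rewrite (_ : i - j = 0)%N ?expr0 ?mulr1 //; lia.
by rewrite e_expry ?mul0r ?subn_gt0.
Qed.

End OneSidedInverse.

Section Subspace.
Variables (K : fieldType) (V : lmodType K).

Definition subspace (S : V -> Prop) :=
  S 0 /\ forall (k : K) u v, S u -> S v -> S (k *: u + v).

Variable S : V -> Prop.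
Hypothesis sS : subspace S.

Lemma subspace0 : S 0.
Proof. by case: sS. Qed.

Lemma subspaceD u v : S u -> S v -> S (u + v).
Proof. by case: sS => _ sSZD Su Sv; rewrite -[u]scale1r; apply: sSZD. Qed.

Lemma subspaceZ (k : K) u : S u -> S (k *: u).
Proof. by case: sS => S0 sSZD Su; rewrite -[k *: u]addr0; apply: sSZD. Qed.

Lemma subspaceB u v : S u -> S v -> S (u - v).
Proof. by move=> Su Sv; rewrite -scaleN1r; apply: subspaceD (subspaceZ _ Sv). Qed.

Lemma subspace_sum (I : Type) (s : seq I) (F : I -> V) :
  (forall i, S (F i)) -> S (\sum_(i <- s) F i).
Proof. by move=> SF; elim/big_ind: _ => //; [exact: subspace0 | exact: subspaceD]. Qed.

End Subspace.

Section PolyIdeal.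
Variables (K : fieldType) (J : {poly K} -> Prop).
Implicit Types (a b c p q : {poly K}).
Hypothesis JB : forall a b, J a -> J b -> J (a - b).
Hypothesis JM : forall c a, J a -> J (c * a).

Definition min_size_in p := forall q, q != 0 -> J q -> (size p <= size q)%N.

Lemma min_size_dvdp p a : p != 0 -> J p -> min_size_in p -> J a -> p %| a.
Proof.
move=> p0 Jp pmin Ja; rewrite dvdp_eq; apply/eqP.
have Jmod : J (a - a %/ p * p) by apply: JB (JM _ Jp).
rewrite {1}(divp_eq a p) addrAC subrr add0r in Jmod.
case: (eqVneq (a %% p) 0) => [r0 | r_neq0]; first by rewrite {1}(divp_eq a p) r0 addr0.
by have := pmin _ r_neq0 Jmod; rewrite leqNgt ltn_modpN0.
Qed.

Lemma exists_monic_min_size :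
  (exists a, a != 0 /\ J a) -> exists p, [/\ p \is monic, J p & min_size_in p].
Proof.
move=> [a [a0 Ja]].
pose sizes n := exists q, [/\ q != 0, J q & size q = n].
have [n [[[q [q0 Jq size_q]] nmin] _]] : has_unique_least_element le sizes.
  by apply: dec_inh_nat_subset_has_unique_least_element; [move=> n; apply: classic | exists (size a), a].
have lq0 : lead_coef q != 0 by rewrite lead_coef_eq0.
exists ((lead_coef q)^-1 *: q); split.
- by rewrite monicE lead_coefZ mulVf.
- by rewrite -mul_polyC; apply: JM.
- move=> q' q'0 Jq'; rewrite size_scale ?invr_eq0 // size_q.
  by apply/leP; apply: nmin; exists q'.
Qed.

End PolyIdeal.

Section EchelonComplement.
Variables (K : fieldType) (U V : {poly K} -> Prop).
Implicit Types (a u w : {poly K}).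

Definition lead_degree n := exists u, U u /\ size u = n.+1.

Definition echelon_compl w := V w /\ forall n, lead_degree n -> w`_n = 0.

Lemma echelon_compl_cap w : U w -> echelon_compl w -> w = 0.
Proof.
move=> Uw [_ w_lead]; apply/eqP; apply: contraT => w0.
have : w`_(size w).-1 = 0 by apply: w_lead; exists w; rewrite prednK // lt0n size_poly_eq0.
by rewrite -lead_coefE => /eqP; rewrite lead_coef_eq0 (negbTE w0).
Qed.

Hypotheses (sU : subspace U) (sV : subspace V) (sUV : forall u, U u -> V u).

Lemma echelon_compl_subspace : subspace echelon_compl.
Proof.
split; first by split; [exact: (subspace0 sV) | move=> n _; rewrite coef0].
move=> k u v [Vu u_lead] [Vv v_lead]; split; first by case: sV => _; apply.
by move=> n Un; rewrite coefD coefZ u_lead // v_lead // mulr0 addr0.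
Qed.

Lemma echelon_compl_decomp a : V a -> exists u w, [/\ U u, echelon_compl w & a = u + w].
Proof.
suff reduce b : forall a, V a -> (forall n, lead_degree n -> (b <= n)%N -> a`_n = 0) ->
    exists u w, [/\ U u, echelon_compl w & a = u + w].
  by move=> Va; apply: (reduce (size a)) => // n _; apply: nth_default.
elim: b => [|b IHb] {}a Va a_high.
  by exists 0, a; split; [exact: (subspace0 sU) | split=> // n /a_high; apply | rewrite add0r].
case: (classic (lead_degree b)) => [[u0 [Uu0 size_u0]] | not_lead]; last first.
  apply: IHb => // n Un; rewrite leq_eqVlt => /orP [/eqP eq_bn | lt_bn]; last exact: a_high.
  by case: not_lead; rewrite eq_bn.
have u0b : u0`_b != 0.
  have -> : b = (size u0).-1 by rewrite size_u0.
  by rewrite -lead_coefE lead_coef_eq0 -size_poly_eq0 size_u0.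
pose c := a`_b / u0`_b.
have Va' : V (a - c *: u0) by apply: (subspaceB sV) => //; apply/sUV/(subspaceZ sU).
have a'_high n : lead_degree n -> (b <= n)%N -> (a - c *: u0)`_n = 0.
  move=> Un le_bn; rewrite coefB coefZ; case: ltngtP le_bn => // [lt_bn | <-] _.
    by rewrite a_high // nth_default ?size_u0 // mulr0 subr0.
  by rewrite divfK // subrr.
have [u [w [Uu Cw ea']]] := IHb _ Va' a'_high.
exists (u + c *: u0), w; split => //; first exact/(subspaceD sU)/(subspaceZ sU).
by rewrite addrAC -ea' subrK.
Qed.

End EchelonComplement.

Section JacobsonAlgebra.
Variable K : fieldType.
Local Notation R := (jacobson K).

Lemma jacobson_scale_sumE (c : K) (g : R) :
  c *: g = \sum_(k <- msupp g) << c * g@_k *g k >>.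
Proof.
rewrite {1}(monalgE g) scaler_sumr; apply: eq_bigr => k _.
by apply/malgP => k'; rewrite mcoeffZ !mcoeffU mulrnAr.
Qed.

Lemma jacobson_scale_mull (c : K) (g : R) : c *: g = (<< c *g bone >> : R) * g.
Proof.
by rewrite jacobson_scale_sumE [RHS]jmulUg; apply: eq_bigr => k _; rewrite bmul1m.
Qed.

Lemma jacobson_scale_mulr (c : K) (g : R) : c *: g = g * (<< c *g bone >> : R).
Proof.
by rewrite jacobson_scale_sumE [RHS]jmulgU; apply: eq_bigr => k _; rewrite bmulm1 mulrC.
Qed.

Lemma jacobson_scalerAl (c : K) (u v : R) : c *: (u * v) = (c *: u) * v.
Proof. by rewrite !jacobson_scale_mull mulrA. Qed.

Lemma jacobson_scalerAr (c : K) (u v : R) : c *: (u * v) = u * (c *: v).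
Proof. by rewrite !jacobson_scale_mulr mulrA. Qed.

End JacobsonAlgebra.

HB.instance Definition _ (K : fieldType) :=
  GRing.Lmodule_isLalgebra.Build K (jacobson K) (@jacobson_scalerAl K).
HB.instance Definition _ (K : fieldType) :=
  GRing.Lalgebra_isAlgebra.Build K (jacobson K) (@jacobson_scalerAr K).

Section Jacobson.
Variable K : fieldType.
Local Notation R := (jacobson K).
Local Notation x := (jx K).
Local Notation y := (jy K).
Local Notation e := (1 - y * x).
Implicit Types (r h : R) (a b c f g : {poly K}).

Lemma peval_horner a r : peval a r = horner_alg r a.
Proof.
rewrite /peval /horner_alg /horner_morph horner_coef size_map_inj_poly;
  [|exact: fmorph_inj | by rewrite rmorph0].
by apply: eq_bigr => i _; rewrite coef_map /= mulr_algl.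
Qed.

Lemma peval_wide n a r : (size a <= n)%N -> peval a r = \sum_(i < n) a`_i *: r ^+ i.
Proof.
move=> le_an; rewrite peval_horner /horner_alg /horner_morph (horner_coef_wide _ (n := n)).
  by apply: eq_bigr => i _; rewrite coef_map /= mulr_algl.
by rewrite size_map_inj_poly //; [exact: fmorph_inj | rewrite rmorph0].
Qed.

Lemma peval0 r : peval 0 r = 0.
Proof. by rewrite peval_horner rmorph0. Qed.

Lemma pevalD a b r : peval (a + b) r = peval a r + peval b r.
Proof. by rewrite !peval_horner rmorphD. Qed.

Lemma pevalB a b r : peval (a - b) r = peval a r - peval b r.
Proof. by rewrite !peval_horner rmorphB. Qed.

Lemma pevalZ (k : K) a r : peval (k *: a) r = k *: peval a r.
Proof. by rewrite !peval_horner linearZ /= mulr_algl. Qed.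

Lemma pevalM a b r : peval (a * b) r = peval a r * peval b r.
Proof. by rewrite !peval_horner rmorphM. Qed.

Lemma pevalXn n r : peval 'X^n r = r ^+ n.
Proof. by rewrite peval_horner rmorphXn /= horner_algX. Qed.

Lemma peval_comm a b r : peval a r * peval b r = peval b r * peval a r.
Proof. by rewrite -!pevalM mulrC. Qed.

Lemma mul_jx_jy : x * y = 1.
Proof. by rewrite /jx /jy [LHS]jmulUU mulr1. Qed.

Lemma expr_yx i j : y ^+ i * x ^+ j = << (i, j) >>.
Proof.
have jxE n : x ^+ n = << (0, n)%N >>.
  elim: n => [|n IHn]; first by rewrite expr0.
  by rewrite exprS IHn [LHS]jmulUU mulr1 /bmul /=; congr << _ *g (_, _) >>; lia.
have jyE n : y ^+ n = << (n, 0)%N >>.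
  elim: n => [|n IHn]; first by rewrite expr0.
  by rewrite exprS IHn [LHS]jmulUU mulr1 /bmul /=; congr << _ *g (_, _) >>; lia.
by rewrite jxE jyE [LHS]jmulUU mulr1 /bmul /=; congr << _ *g (_, _) >>; lia.
Qed.

Lemma jacobson_ind (P : R -> Prop) :
  P 0 -> (forall r1 r2, P r1 -> P r2 -> P (r1 + r2)) ->
  (forall (k : K) r, P r -> P (k *: r)) ->
  (forall i j, P (y ^+ i * x ^+ j)) -> forall r, P r.
Proof.
move=> P0 PD PZ Pyx r; rewrite (monalgE r).
elim/big_ind: _ => // -[i j] _.
have -> : << r@_(i, j) *g (i, j) >> = r@_(i, j) *: (y ^+ i * x ^+ j) :> R.
  by rewrite expr_yx; apply/malgP => k; rewrite mcoeffZ !mcoeffU mulrnAr mulr1.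
exact: PZ.
Qed.

Lemma e_neq0 : e != 0.
Proof.
apply/eqP => /(congr1 (fun r : R => r@_bone)) /eqP.
rewrite -[y]expr1 -[x]expr1 expr_yx mcoeffB mcoeff0 !mcoeffU.
by rewrite subr0 oner_eq0.
Qed.

Lemma e_mul_yx i j : e * (y ^+ i * x ^+ j) = if i == 0%N then e * x ^+ j else 0.
Proof.
case: i => [|i]; first by rewrite expr0 mul1r.
by rewrite mulrA e_expry ?mul0r //; exact: mul_jx_jy.
Qed.

Lemma e_mul_poly_x r : exists a, e * r = e * peval a x.
Proof.
elim/jacobson_ind: r.
- by exists 0; rewrite peval0 !mulr0.
- move=> r1 r2 [a1 ea1] [a2 ea2]; exists (a1 + a2).
  by rewrite mulrDr ea1 ea2 pevalD mulrDr.
- move=> k r [a ea]; exists (k *: a).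
  by rewrite pevalZ -!scalerAr ea.
- move=> i j; rewrite e_mul_yx; case: eqP => _.
  + by exists 'X^j; rewrite pevalXn.
  + by exists 0; rewrite peval0 mulr0.
Qed.

Lemma exprx_mul_poly r :
  exists m0, forall m, (m0 <= m)%N -> exists a, x ^+ m * r = peval a x.
Proof.
elim/jacobson_ind: r.
- by exists 0%N => m _; exists 0; rewrite peval0 mulr0.
- move=> r1 r2 [m1 Pm1] [m2 Pm2]; exists (maxn m1 m2) => m.
  rewrite geq_max => /andP [/Pm1 [a1 ea1] /Pm2 [a2 ea2]].
  by exists (a1 + a2); rewrite mulrDr ea1 ea2 pevalD.
- move=> k r [m0 Pm0]; exists m0 => m /Pm0 [a ea].
  by exists (k *: a); rewrite pevalZ -scalerAr ea.
- move=> i j; exists i => m le_im; exists 'X^(m - i + j).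
  rewrite mulrA (exprxy mul_jx_jy) pevalXn (_ : i - m = 0)%N; last by lia.
  by rewrite expr0 mul1r -exprD.
Qed.

Lemma exprx_poly_y_e j g : x ^+ j * (peval g y * e) = peval (drop_poly j g) y * e.
Proof.
have low_terms c : (size c <= j)%N -> x ^+ j * (peval c y * e) = 0.
  move=> le_cj; rewrite /peval mulr_suml mulr_sumr big1 // => i _.
  rewrite -scalerAl -scalerAr mulrA (exprxy mul_jx_jy) (_ : i - j = 0)%N; last first.
    by have := ltn_ord i; lia.
  rewrite expr0 mul1r (exprx_e mul_jx_jy) ?scaler0 // subn_gt0.
  by have := ltn_ord i; lia.
rewrite -[in LHS](poly_take_drop j g) pevalD mulrDl mulrDr low_terms ?size_take_poly //.
rewrite add0r pevalM peval_comm pevalXn -!mulrA mulrA.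
by rewrite (exprxy mul_jx_jy) subnn !expr0 !mul1r.
Qed.

Lemma mul_poly_y_e r g : exists f, r * (peval g y * e) = peval f y * e.
Proof.
elim/jacobson_ind: r.
- by exists 0; rewrite peval0 !mul0r.
- move=> r1 r2 [f1 ef1] [f2 ef2]; exists (f1 + f2).
  by rewrite mulrDl ef1 ef2 pevalD mulrDl.
- move=> k r [f ef]; exists (k *: f).
  by rewrite -scalerAl ef pevalZ scalerAl.
- move=> i j; exists ('X^i * drop_poly j g).
  by rewrite -mulrA exprx_poly_y_e pevalM pevalXn mulrA.
Qed.

Lemma e_peval_x_expry_lead b :
  e * peval b x * y ^+ (size b).-1 = lead_coef b *: e.
Proof.
case: (posnP (size b)) => [/eqP | b_gt0].
  by rewrite size_poly_eq0 => /eqP ->; rewrite peval0 mulr0 mul0r lead_coef0 scale0r.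
rewrite /peval -(prednK b_gt0) big_ord_recr /= mulrDr mulrDl mulr_sumr mulr_suml.
rewrite big1 ?add0r => [|i _].
  by rewrite -scalerAr -scalerAl (e_exprxy mul_jx_jy) leqnn subnn expr0 mulr1.
by rewrite -scalerAr -scalerAl (e_exprxy mul_jx_jy) leqNgt ltn_ord scaler0.
Qed.

Lemma e_peval_x_expry_eq0 d b : e * peval b x * y ^+ d = 0 -> (size b <= d)%N.
Proof.
move=> eb0; rewrite leqNgt; apply/negP => lt_db.
have := e_peval_x_expry_lead b.
rewrite (_ : (size b).-1 = d + ((size b).-1 - d))%N; last by lia.
rewrite exprD mulrA eb0 mul0r => /esym /eqP.
rewrite scaler_eq0 (negbTE e_neq0) orbF lead_coef_eq0 -size_poly_eq0; lia.
Qed.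

Lemma e_peval_x_eq0 a : e * peval a x = 0 -> a = 0.
Proof.
move=> ea0; apply/eqP; rewrite -size_poly_eq0 -leqn0.
by apply: (e_peval_x_expry_eq0 (d := 0)); rewrite expr0 mulr1.
Qed.

Lemma eq0_of_e_exprx_mul r : (forall k, e * (x ^+ k * r) = 0) -> r = 0.
Proof.
move=> er0; have [m Pm] := exprx_mul_poly r; have [a ea] := Pm m (leqnn m).
rewrite (yx_telescope x y m r) big1 => [|k _]; last by rewrite er0 mulr0.
have a0 : a = 0 by apply: e_peval_x_eq0; rewrite -ea.
by rewrite ea a0 peval0 mulr0 addr0.
Qed.

Lemma fkSE k : fk K k.+1 = y ^+ k * e * x ^+ k.
Proof.
by rewrite /fk /= mulrBr mulrBl mulr1 exprSr exprS !mulrA.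
Qed.

Lemma exprx_fkS k : x ^+ k * fk K k.+1 = e * x ^+ k.
Proof. by rewrite fkSE !mulrA (exprxy mul_jx_jy) subnn !expr0 !mul1r. Qed.

Lemma span_I0P r : span_I0 r <-> exists a, r = e * peval a x.
Proof.
split=> [[n [c ->]] | [a ->]].
  exists (\poly_(k < n) c k); rewrite (peval_wide _ (size_poly _ _)) mulr_sumr.
  by apply: eq_bigr => k _; rewrite coef_poly ltn_ord exprx_fkS scalerAr.
exists (size a), (fun k => a`_k); rewrite /peval mulr_sumr.
by apply: eq_bigr => k _; rewrite exprx_fkS scalerAr.
Qed.

Lemma e_mul_span_I0 l : span_I0 l -> e * l = l.
Proof. by move=> /span_I0P [a ->]; rewrite mulrA (mulee mul_jx_jy). Qed.

Lemma sum_S_e_peval_x d a : (size a <= d)%N -> sum_S d (e * peval a x).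
Proof.
move=> le_ad; exists (fun k => a`_k.-1 *: x ^+ k.-1).
rewrite (peval_wide _ le_ad) big_add1 /= big_mkord mulr_sumr.
by apply: eq_bigr => k _; rewrite -scalerAl exprx_fkS scalerAr.
Qed.

Lemma sum_S_mul_expry d l : sum_S d l -> l * y ^+ d = 0.
Proof.
move=> [c ->]; rewrite mulr_suml big_nat big1 // => -[//|k] /andP [_ lt_kd].
by rewrite fkSE -!mulrA (mulrA e) (e_exprxy mul_jx_jy) leqNgt -ltnS lt_kd !mulr0.
Qed.

Section LeftIdeal.
Variable H : R -> Prop.
Hypothesis hH : left_ideal H.

Lemma lideal0 : H 0.
Proof. by case: hH. Qed.

Lemma lidealD r1 r2 : H r1 -> H r2 -> H (r1 + r2).
Proof. by case: hH => _ HD _; apply: HD. Qed.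

Lemma lidealM s r : H r -> H (s * r).
Proof. by case: hH => _ _ HM; apply: HM. Qed.

Lemma lideal_subspace : subspace H.
Proof.
split=> [|k r1 r2 Hr1 Hr2]; first exact: lideal0.
by apply: lidealD => //; rewrite -[r1]mul1r scalerAl; apply: lidealM.
Qed.

Lemma lideal_rows_subspace : subspace (fun a => H (e * peval a x)).
Proof.
split=> [|k a b Ha Hb]; first by rewrite peval0 mulr0; exact: lideal0.
rewrite pevalD pevalZ mulrDr -scalerAr.
by case: lideal_subspace => _; apply.
Qed.

End LeftIdeal.

Lemma Rmul_lideal (a : R) : left_ideal (Rmul a).
Proof.
split=> [|_ _ [s1 ->] [s2 ->] | s _ [s' ->]]; first by exists 0; rewrite mul0r.
  by exists (s1 + s2); rewrite mulrDl.
by exists (s * s'); rewrite mulrA.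
Qed.

Lemma Rmul_sub H (a : R) : left_ideal H -> H a -> forall r, Rmul a r -> H r.
Proof. by move=> hH Ha _ [s ->]; apply: lidealM. Qed.

Section KySpan.
Variable L : R -> Prop.

Lemma Ky_span0 : Ky_span L 0.
Proof. by exists 0%N, (fun=> 0), (fun=> 0); split => //; rewrite big_ord0. Qed.

Lemma Ky_span_peval_y g l : L l -> Ky_span L (peval g y * l).
Proof. by move=> Ll; exists 1%N, (fun=> g), (fun=> l); rewrite big_ord1. Qed.

Lemma Ky_spanD r1 r2 : Ky_span L r1 -> Ky_span L r2 -> Ky_span L (r1 + r2).
Proof.
move=> [n1 [q1 [l1 [Ll1 ->]]]] [n2 [q2 [l2 [Ll2 ->]]]].
pose cat (T : Type) (f1 f2 : nat -> T) t := if (t < n1)%N then f1 t else f2 (t - n1)%N.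
exists (n1 + n2)%N, (cat _ q1 q2), (cat _ l1 l2); split.
  by move=> i lt_in; rewrite /cat; case: ltnP => ?; [apply: Ll1 | apply: Ll2; lia].
rewrite big_split_ord /=; apply: (f_equal2 +%R); apply: eq_bigr => i _; rewrite /cat /=.
  by rewrite ltn_ord.
by rewrite ltnNge leq_addr /= addKn.
Qed.

Lemma Ky_span_sum (I : Type) (s : seq I) (F : I -> R) :
  (forall i, Ky_span L (F i)) -> Ky_span L (\sum_(i <- s) F i).
Proof. by move=> LF; elim/big_ind: _ => //; [exact: Ky_span0 | exact: Ky_spanD]. Qed.

Lemma Ky_span_mono (L' : R -> Prop) :
  (forall l, L l -> L' l) -> forall r, Ky_span L r -> Ky_span L' r.
Proof. by move=> LL' r [n [q [l [Ll ->]]]]; exists n, q, l; split=> // i lt_in; exact/LL'/Ll. Qed.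

Lemma Ky_span_sub H : left_ideal H -> (forall l, L l -> H l) -> forall r, Ky_span L r -> H r.
Proof.
move=> hH LH r [n [q [l [Ll ->]]]].
by apply: (subspace_sum (lideal_subspace hH)) => i; apply/(lidealM hH)/LH/Ll.
Qed.

(* Elements of [Span(I_0)] are fixed by [e] and [R e = K[y] e]. *)
Lemma Ky_span_lideal : (forall l, L l -> span_I0 l) -> left_ideal (Ky_span L).
Proof.
move=> LI0; split; [exact: Ky_span0 | exact: Ky_spanD |].
move=> s r [n [q [l [Ll ->]]]]; rewrite mulr_sumr; apply: Ky_span_sum => i.
have {}Ll := Ll i (ltn_ord i); rewrite -(e_mul_span_I0 (LI0 _ Ll)) !mulrA -(mulrA s).
have [f ->] := mul_poly_y_e s (q i).
by rewrite -mulrA (e_mul_span_I0 (LI0 _ Ll)); apply: Ky_span_peval_y.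
Qed.

Lemma Ky_span_mul_expry d :
  (forall l, L l -> l * y ^+ d = 0) -> forall r, Ky_span L r -> r * y ^+ d = 0.
Proof.
move=> Ld r [n [q [l [Ll ->]]]]; rewrite mulr_suml big1 // => i _.
by rewrite -mulrA Ld ?mulr0 //; apply: Ll.
Qed.

End KySpan.

Definition sumset (A B : R -> Prop) r := exists (a b : R), [/\ A a, B b & r = a + b].

Section Sumset.
Variables A B : R -> Prop.
Hypotheses (hA : left_ideal A) (hB : left_ideal B).

Lemma sumsetD r1 r2 : sumset A B r1 -> sumset A B r2 -> sumset A B (r1 + r2).
Proof.
move=> [a1 [b1 [Aa1 Bb1 ->]]] [a2 [b2 [Aa2 Bb2 ->]]].
by exists (a1 + a2), (b1 + b2); split; [exact: (lidealD hA) | exact: (lidealD hB) | rewrite addrACA].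
Qed.

Lemma sumset_sum (I : Type) (s : seq I) (F : I -> R) :
  (forall i, sumset A B (F i)) -> sumset A B (\sum_(i <- s) F i).
Proof.
move=> ABF; elim/big_ind: _ => //; last exact: sumsetD.
by exists 0, 0; split; [exact: (lideal0 hA) | exact: (lideal0 hB) | rewrite addr0].
Qed.

End Sumset.

Lemma direct_sum_intro (H A B : R -> Prop) :
  left_ideal H -> left_ideal A -> left_ideal B ->
  (forall r, A r -> H r) -> (forall r, B r -> H r) ->
  (forall z, A z -> B z -> z = 0) -> (forall h, H h -> sumset A B h) ->
  direct_sum H A B.
Proof.
move=> hH hA hB AH BH AB0 HAB; split=> // h; split; first exact: HAB.
by move=> [a [b [Aa Bb ->]]]; apply: (lidealD hH); [apply: AH | apply: BH].
Qed.

Lemma direct_sum_Rmul0 (H A : R -> Prop) :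
  left_ideal A -> (forall h, H h <-> A h) -> direct_sum H A (Rmul 0).
Proof.
move=> hA HA; split; [exact: hA | exact: Rmul_lideal | by move=> z _ [s ->]; rewrite mulr0 |].
move=> h; rewrite HA; split=> [Ah | [a [_ [Aa [s ->] ->]]]]; last by rewrite mulr0 addr0.
by exists h, 0; split; [exact: Ah | exists 0; rewrite mulr0 | rewrite addr0].
Qed.

Definition reduced_row (H : R -> Prop) p r := H r /\ exists c, r = e * peval (c %% p) x.

Section Decomposition.
Variables (H : R -> Prop) (p : {poly K}).
Hypotheses (hH : left_ideal H) (Hp : H (peval p x)).
Hypothesis pdvd : forall a, H (peval a x) -> p %| a.

Lemma reduced_row_span_I0 l : reduced_row H p l -> span_I0 l.
Proof. by move=> [_ [c ->]]; apply/span_I0P; exists (c %% p). Qed.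

Lemma lideal_decomp h : H h -> sumset (Ky_span (reduced_row H p)) (Rmul (peval p x)) h.
Proof.
move=> Hh; have [m Pm] := exprx_mul_poly h; have [a ea] := Pm m (leqnn m).
have hA := Ky_span_lideal reduced_row_span_I0.
rewrite (yx_telescope x y m h); apply: (sumsetD hA (Rmul_lideal _)).
  have a_mul : a = a %/ p * p by apply/eqP; rewrite -dvdp_eq pdvd // -ea; apply: lidealM.
  exists 0, (y ^+ m * peval (a %/ p) x * peval p x); split.
  - exact: Ky_span0.
  - by eexists.
  - by rewrite add0r ea {1}a_mul pevalM !mulrA.
apply: (sumset_sum hA (Rmul_lideal _)) => k.
have [c ec] := e_mul_poly_x (x ^+ k * h).
have ec_split : e * peval c x = e * peval (c %/ p) x * peval p x + e * peval (c %% p) x.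
  by rewrite {1}(divp_eq c p) pevalD pevalM mulrDr mulrA.
exists (y ^+ k * (e * peval (c %% p) x)), (y ^+ k * (e * peval (c %/ p) x) * peval p x).
split; last by rewrite ec ec_split mulrDr [LHS]addrC -!mulrA.
- rewrite -pevalXn; apply: Ky_span_peval_y; split; last by exists c.
  have -> : e * peval (c %% p) x = e * peval c x - e * peval (c %/ p) x * peval p x.
    by rewrite ec_split addrAC subrr add0r.
  by apply: (subspaceB (lideal_subspace hH)); [rewrite -ec | ]; do 2?apply: lidealM.
- by eexists.
Qed.

Hypothesis p0 : p != 0.

Lemma Rmul_peval_x_expry_eq0 z : Rmul (peval p x) z -> z * y ^+ (size p).-1 = 0 -> z = 0.
Proof.
move=> [s ->] zy0; apply: eq0_of_e_exprx_mul => k.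
have [c ec] := e_mul_poly_x (x ^+ k * s).
have ecp : e * (x ^+ k * (s * peval p x)) = e * peval (c * p) x.
  by rewrite pevalM !mulrA -(mulrA e) ec.
have c0 : c = 0.
  apply/eqP; apply: contraT => c0.
  have : e * peval (c * p) x * y ^+ (size p).-1 = 0.
    by rewrite -ecp -!mulrA (mulrA s) zy0 !mulr0.
  move/e_peval_x_expry_eq0; rewrite size_mul //.
  have : (0 < size c)%N by rewrite lt0n size_poly_eq0.
  have : (0 < size p)%N by rewrite lt0n size_poly_eq0.
  by move: (size c) (size p) => sc sp; rewrite -!subn1; lia.
by rewrite ecp c0 mul0r peval0 mulr0.
Qed.

Lemma lideal_direct_sum_poly :
  direct_sum H (Ky_span (fun r => [/\ H r, span_I0 r & sum_S (size p).-1 r]))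
    (Rmul (peval p x)).
Proof.
apply: direct_sum_intro.
- exact: hH.
- by apply: Ky_span_lideal => l [].
- exact: Rmul_lideal.
- by apply: Ky_span_sub => // l [].
- exact: Rmul_sub.
- move=> z Az Bz; apply: Rmul_peval_x_expry_eq0 Bz _.
  by apply: Ky_span_mul_expry Az => l [_ _]; apply: sum_S_mul_expry.
- move=> h /lideal_decomp [l [s [Al Bs ->]]]; exists l, s; split=> //.
  apply: Ky_span_mono Al => r [Hr [c er]]; split=> //; rewrite er; first by apply/span_I0P; eexists.
  by apply: sum_S_e_peval_x; rewrite -ltnS prednK ?ltn_modpN0 // lt0n size_poly_eq0.
Qed.

End Decomposition.

Section NoPolynomial.
Variable H : R -> Prop.
Hypotheses (hH : left_ideal H) (no_poly : forall a, H (peval a x) -> a = 0).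

Lemma lideal_no_poly_Ky_span h : H h <-> Ky_span (fun r => H r /\ span_I0 r) h.
Proof.
split=> [Hh | ]; last by apply: Ky_span_sub => // r [].
have pdvd a : H (peval a x) -> 0 %| a by move/no_poly/eqP; rewrite dvd0p.
have H0 : H (peval 0 x) by rewrite peval0; exact: lideal0.
have [l [_ [Al [s ->] ->]]] := lideal_decomp hH H0 pdvd Hh.
rewrite peval0 mulr0 addr0; apply: Ky_span_mono Al => r [Hr [c er]].
by split=> //; rewrite er; apply/span_I0P; eexists.
Qed.

Variable N : R -> Prop.
Hypotheses (hN : left_ideal N) (NH : forall r, N r -> H r).

Local Notation W := (echelon_compl (fun a => N (e * peval a x)) (fun a => H (e * peval a x))).

Definition echelon_lcompl r := H r /\ forall i, exists2 w, W w & e * (x ^+ i * r) = e * peval w x.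

Lemma rows_echelon_subspace : subspace (fun t => exists2 w, W w & t = e * peval w x).
Proof.
have sW : subspace W by apply: echelon_compl_subspace; exact: lideal_rows_subspace.
split=> [|k _ _ [w1 Ww1 ->] [w2 Ww2 ->]]; first by exists 0; [exact: (subspace0 sW) | rewrite peval0 mulr0].
exists (k *: w1 + w2); first by case: sW => _; apply.
by rewrite pevalD pevalZ mulrDr scalerAr.
Qed.

Lemma echelon_lcompl_lideal : left_ideal echelon_lcompl.
Proof.
have sE := rows_echelon_subspace.
split=> [|r1 r2 [Hr1 Er1] [Hr2 Er2] | s r [Hr Er]].
- by split=> [|i]; [exact: lideal0 | rewrite !mulr0; exact: (subspace0 sE)].
- split=> [|i]; first exact: lidealD.
  by rewrite !mulrDr; apply: (subspaceD sE); [exact: Er1 | exact: Er2].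
- split=> [|i]; first exact: lidealM.
  have [c ec] := e_mul_poly_x (x ^+ i * s).
  rewrite (mulrA (x ^+ i)) (mulrA e) ec -mulrA /peval mulr_suml mulr_sumr.
  apply: (subspace_sum sE) => j; rewrite -scalerAl -scalerAr.
  by apply: (subspaceZ sE); exact: Er.
Qed.

Lemma echelon_lcompl_cap z : N z -> echelon_lcompl z -> z = 0.
Proof.
move=> Nz [_ Ez]; apply: eq0_of_e_exprx_mul => i; have [w Ww ew] := Ez i.
have Nw : N (e * peval w x) by rewrite -ew; do 2!apply: (lidealM hN).
by rewrite ew (echelon_compl_cap Nw Ww) peval0 mulr0.
Qed.

Lemma echelon_lcompl_cover h : H h -> sumset N echelon_lcompl h.
Proof.
move=> /lideal_no_poly_Ky_span [n [q [l [Ll ->]]]].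
apply: (sumset_sum hN echelon_lcompl_lideal) => i.
have [Hl /span_I0P [c el]] := Ll i (ltn_ord i).
have Hc : H (e * peval c x) by rewrite -el.
have [u [w [Nu Ww ecw]]] := echelon_compl_decomp (lideal_rows_subspace hN)
  (lideal_rows_subspace hH) (fun a => @NH (e * peval a x)) Hc.
exists (peval (q i) y * (e * peval u x)), (peval (q i) y * (e * peval w x)); split.
- exact: lidealM.
- apply: (lidealM echelon_lcompl_lideal); split=> [|[|j]]; first by case: Ww.
    by exists w; rewrite // expr0 mul1r mulrA (mulee mul_jx_jy).
  have W0 : W 0 by split=> [|d _]; [rewrite peval0 mulr0; exact: lideal0 | rewrite coef0].
  by exists 0; rewrite // peval0 mulr0 (mulrA (x ^+ _)) (exprx_e mul_jx_jy) // mul0r mulr0.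
- by rewrite el ecw pevalD !mulrDr.
Qed.

End NoPolynomial.

Lemma semisimple_of_no_poly H :
  left_ideal H -> (forall a, H (peval a x) -> a = 0) -> semisimple H.
Proof.
move=> hH no_poly N hN NH; exists (echelon_lcompl H N); split=> [r [] //|].
apply: direct_sum_intro.
- exact: hH.
- exact: hN.
- exact: echelon_lcompl_lideal.
- exact: NH.
- by move=> r [].
- exact: echelon_lcompl_cap.
- exact: echelon_lcompl_cover.
Qed.

Definition x_torsion r := exists m, x ^+ m * r = 0.

Lemma x_torsion_lideal : left_ideal x_torsion.
Proof.
split=> [|r1 r2 [m1 m1r1] [m2 m2r2] | s r [m mr]]; first by exists 0%N; rewrite mulr0.
  exists (m1 + m2)%N.
  by rewrite mulrDr {1}addnC !exprD -!mulrA m1r1 m2r2 !mulr0 addr0.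
have [m0 Pm0] := exprx_mul_poly s; have [a ea] := Pm0 m0 (leqnn m0).
exists (m + m0)%N; rewrite exprD -mulrA (mulrA (x ^+ m0)) ea mulrA.
by rewrite -pevalXn peval_comm pevalXn -mulrA mr mulr0.
Qed.

(* [x_torsion] is the socle [I = <1 - yx>].  If [p(x) = t p(x) + n'] with [x^m t = 0] and [n'] in
   a complement of [I p(x)], then [f_(m+1) p(x) = f_(m+1) n'] lies in both summands, yet it is
   nonzero as [x^m f_(m+1) = e x^m]. *)
Lemma not_semisimple_of_poly H p :
  left_ideal H -> p != 0 -> H (peval p x) -> ~ semisimple H.
Proof.
move=> hH p0 Hp ss.
pose N r := exists2 t, x_torsion t & r = t * peval p x.
have hN : left_ideal N.
  split=> [|_ _ [t1 Tt1 ->] [t2 Tt2 ->] | s _ [t Tt ->]]; first by exists 0; [exact: (lideal0 x_torsion_lideal) | rewrite mul0r].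
    by exists (t1 + t2); [exact: (lidealD x_torsion_lideal) | rewrite mulrDl].
  by exists (s * t); [exact: (lidealM x_torsion_lideal) | rewrite mulrA].
have NH r : N r -> H r by move=> [t _ ->]; apply: lidealM.
have [N' [_ [_ hN' NN'0 HNN']]] := ss N hN NH.
have [_ [n' [[t [m tm0] ->] N'n' ep]]] := (HNN' _).1 Hp.
have gt0 : fk K m.+1 * t = 0 by rewrite fkSE -mulrA tm0 mulr0.
have gp0 : fk K m.+1 * peval p x = 0.
  apply: NN'0.
    exists (fk K m.+1) => //; exists m.+1.
    rewrite fkSE !mulrA (exprxy mul_jx_jy) subSnn (_ : m - m.+1 = 0)%N; last by lia.
    by rewrite expr0 mul1r expr1 (mulx_e mul_jx_jy) mul0r.
  by rewrite ep mulrDr mulrA gt0 mul0r add0r; apply: lidealM.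
have : e * peval ('X^m * p) x = 0.
  by rewrite pevalM pevalXn mulrA -exprx_fkS -mulrA gp0 mulr0.
by move/e_peval_x_eq0/eqP; rewrite mulf_eq0 (negbTE p0) orbF -size_poly_eq0 size_polyXn.
Qed.

End Jacobson.

Theorem corollary3 (K : fieldType) (H : jacobson K -> Prop) :
  left_ideal H ->
  (~ semisimple H ->
     exists p : {poly K},
       [/\ p \is monic,
           H (peval p (jx K)),
           (forall q : {poly K}, q != 0 -> H (peval q (jx K)) ->
              (size p <= size q)%N),
           (forall p' : {poly K}, p' \is monic -> H (peval p' (jx K)) ->
              (forall q : {poly K}, q != 0 -> H (peval q (jx K)) ->
                 (size p' <= size q)%N) -> p' = p)
         & direct_sum H
             (Ky_span (fun r => [/\ H r, span_I0 r & sum_S (size p).-1 r]))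
             (Rmul (peval p (jx K)))]) /\
  (semisimple H ->
     direct_sum H (Ky_span (fun r => H r /\ span_I0 r)) (Rmul 0) /\
     (forall h, H h <-> Ky_span (fun r => H r /\ span_I0 r) h)).
Proof.
move=> hH; pose J a := H (peval a (jx K)).
have JB a b : J a -> J b -> J (a - b).
  by rewrite /J pevalB; apply: (subspaceB (lideal_subspace hH)).
have JM c a : J a -> J (c * a) by rewrite /J pevalM; apply: lidealM.
case: (classic (exists a, a != 0 /\ J a)) => [has_poly | no_poly].
  have [p [pmon Jp pmin]] := exists_monic_min_size JM has_poly.
  have p0 := monic_neq0 pmon.
  have pdvd a : J a -> p %| a by apply: min_size_dvdp.
  split=> [_ | ss]; last by case: (not_semisimple_of_poly hH p0 Jp).
  exists p; split; [exact: pmon | exact: Jp | exact: pmin | | exact: lideal_direct_sum_poly].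
  move=> p' p'mon Jp' p'min; apply/eqP; rewrite -eqp_monic //.
  by rewrite /eqp (min_size_dvdp JB JM (monic_neq0 p'mon) Jp' p'min Jp) pdvd.
have {}no_poly a : J a -> a = 0.
  by move=> Ja; apply/eqP; apply: contraT => a0; case: no_poly; exists a.
have Ky_H := lideal_no_poly_Ky_span hH no_poly.
split=> [nss | _]; first by case: nss; exact: semisimple_of_no_poly.
split; last exact: Ky_H.
by apply: direct_sum_Rmul0 Ky_H; apply: Ky_span_lideal => l [].
Qed.
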